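(* Let $F$ be a finite type and let $\mathcal V$ be a discriminator variety of Cornish algebras of type $F$. Then $\mathcal V$ is the variety generated by some finite set of quasi-primal Cornish algebras of type $F$ that share a common ternary discriminator term.
   Context: Let $F=F^+\,\dot\cup\,F^-$ be a set of unary operation symbols. A Cornish algebra of type $F$ is an algebra $\mathbf A=\langle A;\vee,\wedge,\{f^{\mathbf A}\}_{f\in F},0,1\rangle$ such that $\langle A;\vee,\wedge,0,1\rangle$ is a bounded distributive lattice, $f^{\mathbf A}$ is an endomorphism of this bounded lattice for $f\in F^+$, and a dual endomorphism (order-reversing, interchanging $\vee$ with $\wedge$ and $0$ with $1$) for $f\in F^-$. The ternary discriminator on $A$ is $\tau(x,y,z)=x$ if $x\ne y$, $=z$ if $x=y$. A variety is a discriminator variety if some ternary term induces $\tau$ on every subdirectly irreducible member. A finite algebra is quasi-primal if $\tau$ is one of its term functions; a family shares a common ternary discriminator term if a single ternary term induces $\tau$ on each member. *)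

From mathcomp Require Import all_boot.
From Stdlib Require List.
Set Implicit Arguments.
Unset Strict Implicit.
Unset Printing Implicit Defensive.

(** Type F = F^+ \dot\cup F^- : a finite set of unary symbols, with
    [pos f = true] iff f \in F^+ (so f \in F^- iff pos f = false). *)

Record CornishAlg (F : finType) (pos : pred F) := {
  carrier :> Type;
  join : carrier -> carrier -> carrier;
  meet : carrier -> carrier -> carrier;
  op : F -> carrier -> carrier;
  bot : carrier;
  top : carrier;
  joinA : forall x y z, join x (join y z) = join (join x y) z;
  meetA : forall x y z, meet x (meet y z) = meet (meet x y) z;
  joinC : forall x y, join x y = join y x;
  meetC : forall x y, meet x y = meet y x;
  join_meetK : forall x y, join x (meet x y) = x;
  meet_joinK : forall x y, meet x (join x y) = x;
  meet_joinDr : forall x y z, meet x (join y z) = join (meet x y) (meet x z);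
  join0x : forall x, join bot x = x;
  meet1x : forall x, meet top x = x;
  op_pos_join : forall f x y, pos f -> op f (join x y) = join (op f x) (op f y);
  op_pos_meet : forall f x y, pos f -> op f (meet x y) = meet (op f x) (op f y);
  op_pos_bot : forall f, pos f -> op f bot = bot;
  op_pos_top : forall f, pos f -> op f top = top;
  op_neg_join : forall f x y, ~~ pos f -> op f (join x y) = meet (op f x) (op f y);
  op_neg_meet : forall f x y, ~~ pos f -> op f (meet x y) = join (op f x) (op f y);
  op_neg_bot : forall f, ~~ pos f -> op f bot = top;
  op_neg_top : forall f, ~~ pos f -> op f top = bot
}.

Inductive term (F : Type) (X : Type) :=
| tVar : X -> term F X
| tJoin : term F X -> term F X -> term F X
| tMeet : term F X -> term F X -> term F X
| tOp : F -> term F X -> term F X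
| tBot : term F X
| tTop : term F X.

Fixpoint eval (F : finType) (pos : pred F) (A : CornishAlg pos) (X : Type)
  (rho : X -> A) (t : term F X) : A :=
  match t with
  | tVar x => rho x
  | tJoin s u => join (eval rho s) (eval rho u)
  | tMeet s u => meet (eval rho s) (eval rho u)
  | tOp f s => op f (eval rho s)
  | tBot => bot A
  | tTop => top A
  end.

Definition identity (F : Type) := (term F nat * term F nat)%type.

Definition satisfies (F : finType) (pos : pred F) (A : CornishAlg pos)
  (e : identity F) : Prop :=
  forall rho : nat -> A, eval rho e.1 = eval rho e.2.

(** A variety of Cornish algebras of type F: an equational class, i.e. the
    class of all Cornish algebras satisfying a set of identities
    (equivalently, by Birkhoff, a class closed under H, S, P). *)
Definition is_variety (F : finType) (pos : pred F)
  (V : CornishAlg pos -> Prop) : Prop :=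
  exists Sigma : identity F -> Prop,
    forall A, V A <-> (forall e, Sigma e -> satisfies A e).

(** The variety generated by a class K: Mod(Id(K)) (= HSP(K) by Birkhoff). *)
Definition generated_variety (F : finType) (pos : pred F)
  (K : CornishAlg pos -> Prop) (A : CornishAlg pos) : Prop :=
  forall e : identity F, (forall B, K B -> satisfies B e) -> satisfies A e.

Definition congruence (F : finType) (pos : pred F) (A : CornishAlg pos)
  (theta : A -> A -> Prop) : Prop :=
  [/\ (forall x, theta x x),
      (forall x y, theta x y -> theta y x),
      (forall x y z, theta x y -> theta y z -> theta x z),
      (forall x x' y y', theta x x' -> theta y y' ->
          theta (join x y) (join x' y') /\ theta (meet x y) (meet x' y'))
    & (forall f x x', theta x x' -> theta (op f x) (op f x'))].

(** A is subdirectly irreducible iff it is nontrivial and has a monolith: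
    a pair (a, b), a <> b, contained in every non-identity congruence. *)
Definition subdirectly_irreducible (F : finType) (pos : pred F)
  (A : CornishAlg pos) : Prop :=
  exists a b : A, a <> b /\
    forall theta, congruence theta ->
      (exists x y, theta x y /\ x <> y) -> theta a b.

Definition induces_discriminator (F : finType) (pos : pred F)
  (A : CornishAlg pos) (t : term F 'I_3) : Prop :=
  forall rho : 'I_3 -> A,
    let x := rho ord0 in let y := rho (inord 1) in let z := rho (inord 2) in
    (x <> y -> eval rho t = x) /\ (x = y -> eval rho t = z).

Definition discriminator_variety (F : finType) (pos : pred F)
  (V : CornishAlg pos -> Prop) : Prop :=
  is_variety V /\
  exists t : term F 'I_3,
    forall A, V A -> subdirectly_irreducible A -> induces_discriminator A t.

Definition finite_alg (F : finType) (pos : pred F) (A : CornishAlg pos) : Prop :=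
  exists s : list A, forall x : A, List.In x s.

Definition quasi_primal (F : finType) (pos : pred F) (A : CornishAlg pos) : Prop :=
  finite_alg A /\ exists t : term F 'I_3, induces_discriminator A t.

From mathcomp Require Import all_boot.
From mathcomp Require Import boolp classical_sets.
From Stdlib Require List.
Set Implicit Arguments.
Unset Strict Implicit.
Unset Printing Implicit Defensive.

(* Let t be the discriminator term of V. If Q is subdirectly irreducible in V,
   pick a prime filter of its lattice reduct, i.e. a lattice homomorphism
   h : Q -> bool, and send x to the values h (w x) for all words w in F of
   length at most 2 * depth t. This signature map is injective, because the
   term t (t x y 0) (t x y 1) 1 has that depth and takes the value 1 if x <> y
   and 0 if x = y. So every subdirectly irreducible member of V is isomorphic
   to one of finitely many algebras coded on subsets of the finite set of
   signatures; these are quasi-primal through t. They generate V because an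
   identity failing in some member of V fails, by Zorn's lemma, in a
   subdirectly irreducible quotient of it. *)

Section Lattice.
Variables (F : finType) (pos : pred F) (A : CornishAlg pos).
Implicit Types x y z : A.

Lemma meetxx x : meet x x = x.
Proof. by rewrite -{2}(join_meetK x x) meet_joinK. Qed.

Lemma meet0x x : meet (bot A) x = bot A.
Proof. by rewrite -{1}(join0x x) meet_joinK. Qed.

Lemma join1x x : join (top A) x = top A.
Proof. by rewrite -{1}(meet1x x) join_meetK. Qed.

Lemma bot_top_trivial : bot A = top A -> forall x y : A, x = y.
Proof. by move=> bot_top x y; rewrite -(meet1x x) -(meet1x y) -bot_top !meet0x. Qed.

Definition lle x y := meet x y = x.

Lemma lle_refl x : lle x x.
Proof. exact: meetxx. Qed.

Lemma lle_trans x y z : lle x y -> lle y z -> lle x z.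
Proof. by rewrite /lle => xy yz; rewrite -xy -meetA yz. Qed.

Lemma join_lle x y : lle x y -> join x y = y.
Proof. by rewrite /lle => <-; rewrite joinC meetC join_meetK. Qed.

Lemma lle_meetl x y : lle (meet x y) x.
Proof. by rewrite /lle meetC meetA meetxx. Qed.

Lemma lle_meetr x y : lle (meet x y) y.
Proof. by rewrite /lle -meetA meetxx. Qed.

Lemma lle_joinl x y : lle x (join x y).
Proof. exact: meet_joinK. Qed.

Lemma lle_meet x y z : lle z x -> lle z y -> lle z (meet x y).
Proof. by rewrite /lle => zx zy; rewrite meetA zx zy. Qed.

Lemma lle_meet2 x y x' y' : lle x x' -> lle y y' -> lle (meet x y) (meet x' y').
Proof.
move=> xx' yy'; apply: lle_meet.
  exact: lle_trans (lle_meetl _ _) xx'.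
exact: lle_trans (lle_meetr _ _) yy'.
Qed.

Lemma lle_bot x : lle x (bot A) -> x = bot A.
Proof. by rewrite /lle meetC meet0x. Qed.

End Lattice.

Section Homomorphisms.
Variables (F : finType) (pos : pred F).

Definition hom (A B : CornishAlg pos) (g : A -> B) :=
  [/\ {morph g : x y / join x y}, {morph g : x y / meet x y},
      forall f, {morph g : x / op f x}, g (bot A) = bot B & g (top A) = top B].

Lemma eval_hom (A B : CornishAlg pos) (g : A -> B) (X : Type) (rho : X -> A) s :
  hom g -> g (eval rho s) = eval (g \o rho) s.
Proof.
case=> gJ gM gO g0 g1.
by elim: s => //= [s1 IH1 s2 IH2|s1 IH1 s2 IH2|f s IH]; rewrite ?gJ ?gM ?gO ?IH1 ?IH2 ?IH.
Qed.

Lemma hom_surj_satisfies (A B : CornishAlg pos) (g : A -> B) e :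
  hom g -> (forall y, exists x, g x = y) -> satisfies A e -> satisfies B e.
Proof.
move=> gH gS Ae rho.
have [rho' grho] : exists rho' : nat -> A, g \o rho' = rho.
  exists (fun n => sval (cid (gS (rho n)))); apply: funext => n /=.
  by case: cid.
by rewrite -grho -!eval_hom // Ae.
Qed.

End Homomorphisms.

Section ZornAbove.
Variable T : Type.
Local Open Scope classical_set_scope.

Lemma bigcup_total2 (C : set (set T)) p q : total_on C subset ->
  (\bigcup_(X in C) X) p -> (\bigcup_(X in C) X) q -> exists2 Z, C Z & Z p /\ Z q.
Proof.
move=> totC [X CX Xp] [Y CY Yq].
case: (totC _ _ CX CY) => [XY|YX]; first by exists Y => //; split=> //; apply: XY.
by exists X => //; split=> //; apply: YX.
Qed.

Lemma Zorn_above (P : set (set T)) (X0 : set T) : P X0 ->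
  (forall C : set (set T), C `<=` P -> C !=set0 -> total_on C subset ->
    P (\bigcup_(X in C) X)) ->
  exists M, [/\ P M, X0 `<=` M & forall X, P X -> M `<=` X -> X `<=` M].
Proof.
move=> PX0 Pchain.
pose Pabove := {X | P X /\ X0 `<=` X}.
pose R (X Y : Pabove) := `[< sval X `<=` sval Y >].
pose X0above : Pabove := exist _ X0 (conj PX0 (@subset_refl _ X0)).
have [|||[M [PM X0M]] maxM] := ZL_preorder X0above (R := R).
- by move=> X; apply/asboolP.
- by move=> X Y Z /asboolP XY /asboolP YZ; apply/asboolP; apply: subset_trans YZ.
- move=> C totC; have [[X0' CX0']|C0] := pselect (C !=set0); last first.
    by exists X0above => X CX; case: C0; exists X.
  pose C' := [set sval X | X in C].
  have C'P : C' `<=` P by move=> _ [X _ <-]; case: (svalP X).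
  have totC' : total_on C' subset.
    by move=> _ _ [X CX <-] [Y CY <-]; case: (totC _ _ CX CY) => /asboolP; [left|right].
  have sub_bigcup X : C X -> sval X `<=` \bigcup_(Y in C') Y.
    by move=> CX z Xz; exists (sval X) => //; exists X.
  have PU : P (\bigcup_(Y in C') Y).
    by apply: Pchain => //; exists (sval X0'), X0'.
  have X0U : X0 `<=` \bigcup_(Y in C') Y.
    exact: subset_trans (proj2 (svalP X0')) (sub_bigcup _ CX0').
  exists (exist (fun X => P X /\ X0 `<=` X) _ (conj PU X0U)).
  by move=> X CX; apply/asboolP; apply: sub_bigcup.
exists M; split=> // X PX MX.
by apply/asboolP/(maxM (exist _ X (conj PX (subset_trans X0M MX)))); apply/asboolP.
Qed.

End ZornAbove.

Section MaximalCongruence.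
Variables (F : finType) (pos : pred F) (A : CornishAlg pos).
Local Open Scope classical_set_scope.

Lemma congruence_bigcup (C : set (set (A * A))) :
  (forall X, C X -> congruence (fun x y => X (x, y))) -> C !=set0 ->
  total_on C subset -> congruence (fun x y => (\bigcup_(X in C) X) (x, y)).
Proof.
move=> Ccong [X0 CX0] totC; split.
- by move=> x; exists X0 => //; case: (Ccong _ CX0).
- by move=> x y [X CX Xxy]; exists X => //; case: (Ccong _ CX) => _ sym _ _ _; apply: sym.
- move=> x y z xy yz; have [X CX [Xxy Xyz]] := bigcup_total2 totC xy yz.
  by exists X => //; case: (Ccong _ CX) => _ _ trans _ _; apply: trans Xxy Xyz.
- move=> x x' y y' xx' yy'; have [X CX [Xxx' Xyy']] := bigcup_total2 totC xx' yy'.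
  by case: (Ccong _ CX) => _ _ _ comp _; case: (comp _ _ _ _ Xxx' Xyy'); split; exists X.
- move=> f x x' [X CX Xxx']; exists X => //.
  by case: (Ccong _ CX) => _ _ _ _ opc; apply: opc.
Qed.

Lemma maximal_congruence (a b : A) : a <> b ->
  exists th, [/\ congruence th, ~ th a b &
    forall th', congruence th' -> ~ th' a b ->
      (forall x y, th x y -> th' x y) -> forall x y, th' x y -> th x y].
Proof.
move=> neq_ab.
pose P (X : set (A * A)) := congruence (fun x y => X (x, y)) /\ ~ X (a, b).
have P_diag : P [set p | p.1 = p.2].
  by split=> //; split=> [x|x y /= ->|x y z /= -> ->|x x' y y' /= -> ->|f x x' /= ->].
have P_chain C : C `<=` P -> C !=set0 -> total_on C subset -> P (\bigcup_(X in C) X).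
  move=> CP C0 totC; split; first by apply: congruence_bigcup => // X /CP [].
  by case=> X /CP [_ Xab].
have [M [[M_cong Mab] _ maxM]] := Zorn_above P_diag P_chain.
exists (fun x y => M (x, y)); split=> // th' th'_cong th'ab Mth' x y.
have MX : M `<=` [set p | th' p.1 p.2] by move=> [u v] /Mth'.
exact: (maxM _ (conj th'_cong th'ab) MX (x, y)).
Qed.

End MaximalCongruence.

Section Quotient.
Variables (F : finType) (pos : pred F) (A : CornishAlg pos) (th : A -> A -> Prop).
Hypothesis th_cong : congruence th.

Let th_refl x : th x x. Proof. by case: th_cong. Qed.
Let th_sym x y : th x y -> th y x. Proof. by case: th_cong => _ sym _ _ _; apply: sym. Qed.
Let th_trans x y z : th x y -> th y z -> th x z.
Proof. by case: th_cong => _ _ trans _ _; apply: trans. Qed.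

Definition quot_carrier := {P : A -> Prop | exists x, P = th x}.

Definition qpi (x : A) : quot_carrier := exist _ (th x) (ex_intro _ x erefl).

Definition qrepr (p : quot_carrier) : A := sval (cid (svalP p)).

Lemma qreprK p : qpi (qrepr p) = p.
Proof. by case: p => P hP; apply: eq_exist; rewrite /qrepr /=; case: cid => x /= ->. Qed.

Lemma qpi_eq x y : qpi x = qpi y <-> th x y.
Proof.
split=> [/(congr1 sval) /= thxy|xy]; first by rewrite thxy; apply: th_refl.
apply: eq_exist; apply: funext => z; apply: propext.
by split=> [xz|yz]; [apply: th_trans (th_sym xy) xz|apply: th_trans xy yz].
Qed.

Lemma qrepr_pi x : th (qrepr (qpi x)) x.
Proof. by apply/qpi_eq; rewrite qreprK. Qed.

Lemma quot_ind (P : quot_carrier -> Prop) : (forall x, P (qpi x)) -> forall p, P p.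
Proof. by move=> Ppi p; rewrite -(qreprK p). Qed.

Definition qjoin p q := qpi (join (qrepr p) (qrepr q)).
Definition qmeet p q := qpi (meet (qrepr p) (qrepr q)).
Definition qop f p := qpi (op f (qrepr p)).

Lemma qpi_join x y : qjoin (qpi x) (qpi y) = qpi (join x y).
Proof.
apply/qpi_eq; case: th_cong => _ _ _ comp _.
by case: (comp _ _ _ _ (qrepr_pi x) (qrepr_pi y)).
Qed.

Lemma qpi_meet x y : qmeet (qpi x) (qpi y) = qpi (meet x y).
Proof.
apply/qpi_eq; case: th_cong => _ _ _ comp _.
by case: (comp _ _ _ _ (qrepr_pi x) (qrepr_pi y)).
Qed.

Lemma qpi_op f x : qop f (qpi x) = qpi (op f x).
Proof. by apply/qpi_eq; case: th_cong => _ _ _ _ opc; apply: opc; apply: qrepr_pi. Qed.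

Local Ltac quot_elim := move=> *;
  repeat match goal with p : quot_carrier |- _ =>
    rewrite -(qreprK p); move: (qrepr p); clear p => p end;
  rewrite ?(qpi_join, qpi_meet, qpi_op).

Lemma qjoinA : associative qjoin. Proof. by quot_elim; rewrite joinA. Qed.
Lemma qmeetA : associative qmeet. Proof. by quot_elim; rewrite meetA. Qed.
Lemma qjoinC : commutative qjoin. Proof. by quot_elim; rewrite joinC. Qed.
Lemma qmeetC : commutative qmeet. Proof. by quot_elim; rewrite meetC. Qed.
Lemma qjoin_meetK p q : qjoin p (qmeet p q) = p. Proof. by quot_elim; rewrite join_meetK. Qed.
Lemma qmeet_joinK p q : qmeet p (qjoin p q) = p. Proof. by quot_elim; rewrite meet_joinK. Qed.
Lemma qmeet_joinDr p q r : qmeet p (qjoin q r) = qjoin (qmeet p q) (qmeet p r).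
Proof. by quot_elim; rewrite meet_joinDr. Qed.
Lemma qjoin0x : left_id (qpi (bot A)) qjoin. Proof. by quot_elim; rewrite join0x. Qed.
Lemma qmeet1x : left_id (qpi (top A)) qmeet. Proof. by quot_elim; rewrite meet1x. Qed.
Lemma qop_pos_join f p q : pos f -> qop f (qjoin p q) = qjoin (qop f p) (qop f q).
Proof. by quot_elim; rewrite op_pos_join. Qed.
Lemma qop_pos_meet f p q : pos f -> qop f (qmeet p q) = qmeet (qop f p) (qop f q).
Proof. by quot_elim; rewrite op_pos_meet. Qed.
Lemma qop_pos_bot f : pos f -> qop f (qpi (bot A)) = qpi (bot A).
Proof. by quot_elim; rewrite op_pos_bot. Qed.
Lemma qop_pos_top f : pos f -> qop f (qpi (top A)) = qpi (top A).
Proof. by quot_elim; rewrite op_pos_top. Qed.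
Lemma qop_neg_join f p q : ~~ pos f -> qop f (qjoin p q) = qmeet (qop f p) (qop f q).
Proof. by quot_elim; rewrite op_neg_join. Qed.
Lemma qop_neg_meet f p q : ~~ pos f -> qop f (qmeet p q) = qjoin (qop f p) (qop f q).
Proof. by quot_elim; rewrite op_neg_meet. Qed.
Lemma qop_neg_bot f : ~~ pos f -> qop f (qpi (bot A)) = qpi (top A).
Proof. by quot_elim; rewrite op_neg_bot. Qed.
Lemma qop_neg_top f : ~~ pos f -> qop f (qpi (top A)) = qpi (bot A).
Proof. by quot_elim; rewrite op_neg_top. Qed.

Definition quotient : CornishAlg pos :=
  Build_CornishAlg qjoinA qmeetA qjoinC qmeetC qjoin_meetK qmeet_joinK qmeet_joinDr
    qjoin0x qmeet1x qop_pos_join qop_pos_meet qop_pos_bot qop_pos_top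
    qop_neg_join qop_neg_meet qop_neg_bot qop_neg_top.

Lemma qpi_hom : hom (qpi : A -> quotient).
Proof. by split=> // [x y|x y|f x]; rewrite /= ?qpi_join ?qpi_meet ?qpi_op. Qed.

Lemma qpi_surj (p : quotient) : exists x, qpi x = p.
Proof. by exists (qrepr p); apply: qreprK. Qed.

Lemma quotient_si (a b : A) : ~ th a b ->
  (forall th', congruence th' -> ~ th' a b ->
    (forall x y, th x y -> th' x y) -> forall x y, th' x y -> th x y) ->
  subdirectly_irreducible quotient.
Proof.
move=> thab maxth; exists (qpi a), (qpi b).
split=> [/qpi_eq //|Th Th_cong [p [q [Thpq neq_pq]]]].
case: Th_cong => Th_refl Th_sym Th_trans Th_comp Th_op.
pose th' x y := Th (qpi x) (qpi y).
have th'_cong : congruence th'.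
  split=> [x|x y|x y z|x x' y y' xx' yy'|f x x' xx'].
  - exact: Th_refl.
  - exact: Th_sym.
  - exact: Th_trans.
  - by rewrite /th' -!qpi_join -!qpi_meet; apply: Th_comp.
  - by rewrite /th' -!qpi_op; apply: Th_op.
have thth' x y : th x y -> th' x y by move=> /qpi_eq; rewrite /th' => ->.
apply: contrapT => Thab; apply: neq_pq.
move: Thpq; elim/quot_ind: p; elim/quot_ind: q => y x Thxy.
exact/qpi_eq/(maxth th' th'_cong Thab thth').
Qed.

End Quotient.

Lemma satisfies_of_si_quotients (F : finType) (pos : pred F) (A : CornishAlg pos) e :
  (forall (th : A -> A -> Prop) (th_cong : congruence th),
     subdirectly_irreducible (quotient th_cong) -> satisfies (quotient th_cong) e) ->
  satisfies A e.
Proof.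
move=> siQ rho; apply: contrapT => neq.
have [th [th_cong thab maxth]] := maximal_congruence neq.
have /(_ (qpi th \o rho)) := siQ _ th_cong (quotient_si th_cong thab maxth).
by rewrite -!(eval_hom _ _ (qpi_hom th_cong)) => /(qpi_eq th_cong)/thab.
Qed.

Section PrimeFilter.
Variables (F : finType) (pos : pred F) (A : CornishAlg pos).
Hypothesis bot_neq_top : bot A <> top A.
Local Open Scope classical_set_scope.

Let lattice_filter (X : set A) :=
  (forall x y, X x -> X y -> X (meet x y)) /\ (forall x y, X x -> X (join x y)).

Let proper_filter X := lattice_filter X /\ ~ X (bot A).

Let proper_filter_bigcup (C : set (set A)) : C `<=` proper_filter -> C !=set0 ->
  total_on C subset -> proper_filter (\bigcup_(X in C) X).
Proof.
move=> Cfilt _ totC; split; last by case=> X /Cfilt [].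
split=> [x y xU yU|x y [X CX Xx]].
  have [X CX [Xx Xy]] := bigcup_total2 totC xU yU.
  by exists X => //; case: (Cfilt _ CX) => -[meetX _] _; apply: meetX.
by exists X => //; case: (Cfilt _ CX) => -[_ joinX] _; apply: joinX.
Qed.

Lemma prime_filter_hom : exists h : A -> bool,
  [/\ {morph h : x y / join x y >-> x || y}, {morph h : x y / meet x y >-> x && y},
      h (bot A) = false & h (top A) = true].
Proof.
have top_filter : proper_filter [set top A].
  by split=> [|/esym //]; split=> x y /= -> => [->|]; rewrite ?meetxx ?join1x.
have [M [[[meetM joinM] Mbot] MT maxM]] :=
  Zorn_above top_filter proper_filter_bigcup.
have Mtop : M (top A) by apply: MT.
have upM x y : M x -> lle x y -> M y by move=> Mx /join_lle <-; apply: joinM.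
(* By maximality, the filter generated by M and any x outside M contains bot. *)
have disjoint x : ~ M x -> exists2 m, M m & meet m x = bot A.
  move=> Mx; pose G := [set w | exists2 m, M m & lle (meet m x) w].
  apply: contrapT => nG; apply: Mx.
  suff GM : G `<=` M by apply: GM; exists (top A) => //; rewrite meet1x; apply: lle_refl.
  apply: maxM => [|w Mw]; last by exists w => //; apply: lle_meetl.
  split=> [|[m Mm /lle_bot mx]]; last by apply: nG; exists m.
  split=> [w1 w2 [m1 M1 le1] [m2 M2 le2]|w v [m Mm le_mw]].
    exists (meet m1 m2); first exact: meetM.
    apply: lle_meet; [apply: lle_trans le1|apply: lle_trans le2];
      apply: lle_meet2 (lle_refl x); [apply: lle_meetl|apply: lle_meetr].
  by exists m => //; apply: lle_trans le_mw (lle_joinl _ _).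
have prime x y : M (join x y) -> M x \/ M y.
  move=> Mxy; apply: contrapT => /not_orP [Mx My].
  have [m1 M1 m1x] := disjoint x Mx; have [m2 M2 m2y] := disjoint y My.
  apply: Mbot; have := meetM _ _ (meetM _ _ M1 M2) Mxy; rewrite meet_joinDr.
  have -> : meet (meet m1 m2) x = bot A by rewrite (meetC m1) -meetA m1x meetC meet0x.
  have -> : meet (meet m1 m2) y = bot A by rewrite -meetA m2y meetC meet0x.
  by rewrite join0x.
exists (fun x => `[< M x >]); split.
- move=> x y; apply/asboolP/orP => [/prime [] ?|[] /asboolP ?]; [left|right| |rewrite joinC];
    by [apply/asboolP|apply: joinM].
- move=> x y; apply/asboolP/andP => [Mxy|[/asboolP Mx /asboolP My]]; last exact: meetM.
  by split; apply/asboolP; apply: upM Mxy _; [apply: lle_meetl|apply: lle_meetr].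
- exact/negbTE/asboolP.
- exact/asboolP.
Qed.

End PrimeFilter.

Fixpoint depth (F X : Type) (s : term F X) : nat :=
  match s with
  | tVar _ | tBot | tTop => 0
  | tJoin s1 s2 | tMeet s1 s2 => maxn (depth s1) (depth s2)
  | tOp _ s => (depth s).+1
  end.

Fixpoint words (F : finType) (n : nat) : seq (seq F) :=
  if n is n'.+1 then [::] :: [seq f :: w | f <- enum F, w <- words F n'] else [:: [::]].

Lemma wordsP (F : finType) n (w : seq F) : size w <= n -> w \in words F n.
Proof.
elim: n w => [|n IH] [|f w] //= ltwn; rewrite inE; apply/orP; right.
by apply: (allpairs_f (fun f w => f :: w)); [rewrite mem_enum|apply: IH].
Qed.

Section WordAction.
Variables (F : finType) (pos : pred F) (A : CornishAlg pos).
Implicit Types (x y : A) (w : seq F).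

Definition word_act w x := foldr (@op _ _ A) x w.
Definition word_parity w := odd (count (predC pos) w).

Definition join_or_meet (b : bool) : A -> A -> A := if b then @meet _ _ A else @join _ _ A.

Lemma op_join_or_meet f b x y :
  op f (join_or_meet b x y) = join_or_meet (b (+) ~~ pos f) (op f x) (op f y).
Proof.
case: b; case pf: (pos f) => /=;
  [apply: op_pos_meet|apply: op_neg_meet|apply: op_pos_join|apply: op_neg_join];
  by rewrite pf.
Qed.

Lemma word_act_join_or_meet w b x y :
  word_act w (join_or_meet b x y) =
  join_or_meet (b (+) word_parity w) (word_act w x) (word_act w y).
Proof.
elim: w => [|f w IH] /=; first by rewrite addbF.
rewrite IH op_join_or_meet /word_parity /= oddD -addbA; congr join_or_meet.
by rewrite (addbC (odd _)) /= oddb.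
Qed.

Lemma word_act_rcons w f x : word_act (rcons w f) x = word_act w (op f x).
Proof. by elim: w => //= g w ->. Qed.

End WordAction.

Definition rho3 (T : Type) (x y z : T) (i : 'I_3) : T := nth x [:: x; y; z] i.

Section Discriminator.
Variables (F : finType) (pos : pred F) (A : CornishAlg pos) (t : term F 'I_3).
Hypothesis tA : induces_discriminator A t.
Implicit Types x y z : A.

Lemma discriminator_neq x y z : x <> y -> eval (rho3 x y z) t = x.
Proof. by have := tA (rho3 x y z); rewrite /rho3 /= !inordK // => -[]. Qed.

Lemma discriminator_eq x z : eval (rho3 x x z) t = z.
Proof. by have := tA (rho3 x x z); rewrite /rho3 /= !inordK // => -[_ ->]. Qed.

End Discriminator.

Notation signatures F n := {ffun seq_sub (words F n) -> bool}.

Section Signatures.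
Variables (F : finType) (pos : pred F) (A : CornishAlg pos) (h : A -> bool).
Hypothesis h_join : {morph h : x y / join x y >-> x || y}.
Hypothesis h_meet : {morph h : x y / meet x y >-> x && y}.

Definition agree n (x y : A) :=
  forall w, size w <= n -> h (word_act w x) = h (word_act w y).

Lemma agree_refl n x : agree n x x.
Proof. by []. Qed.

Lemma agree_le m n x y : m <= n -> agree n x y -> agree m x y.
Proof. by move=> lemn xy w lewm; apply: xy; apply: leq_trans lemn. Qed.

Lemma agree_join_or_meet b n x x' y y' : agree n x x' -> agree n y y' ->
  agree n (join_or_meet b x y) (join_or_meet b x' y').
Proof.
move=> xx' yy' w lewn; rewrite !word_act_join_or_meet.
by case: (b (+) _); rewrite /= ?h_join ?h_meet xx' ?yy'.
Qed.

Lemma agree_op f n x y : agree n.+1 x y -> agree n (op f x) (op f y).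
Proof. by move=> xy w lewn; rewrite -!word_act_rcons; apply: xy; rewrite size_rcons. Qed.

Lemma agree_eval (X : Type) (s : term F X) n (rho rho' : X -> A) :
  (forall i, agree (n + depth s) (rho i) (rho' i)) -> agree n (eval rho s) (eval rho' s).
Proof.
elim: s n => [i|s1 IH1 s2 IH2|s1 IH1 s2 IH2|f s IH||] n /= rr' //.
- by move: (rr' i); rewrite addn0.
- apply: (agree_join_or_meet false); [apply: IH1|apply: IH2] => i;
    by apply: agree_le (rr' i); rewrite leq_add2l ?leq_maxl ?leq_maxr.
- apply: (agree_join_or_meet true); [apply: IH1|apply: IH2] => i;
    by apply: agree_le (rr' i); rewrite leq_add2l ?leq_maxl ?leq_maxr.
- by apply: agree_op; apply: IH => i; rewrite addSnnS.
Qed.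

Definition signature n (x : A) : signatures F n := [ffun w => h (word_act (ssval w) x)].

Lemma signature_agree n x y : signature n x = signature n y -> agree n x y.
Proof.
move=> xy w lewn; have := congr1 (fun g : signatures F n => g (SeqSub (wordsP lewn))) xy.
by rewrite !ffunE.
Qed.

Hypotheses (h_bot : h (bot A) = false) (h_top : h (top A) = true).

Lemma signature_inj t : induces_discriminator A t -> bot A <> top A ->
  injective (signature (2 * depth t)).
Proof.
move=> tA bot_neq_top x y /signature_agree xy.
(* sep u v is top if u <> v and bot if u = v, and has depth 2 * depth t. *)
pose sep u v :=
  eval (rho3 (eval (rho3 u v (bot A)) t) (eval (rho3 u v (top A)) t) (top A)) t.
have sep_xx : sep x x = bot A.
  by rewrite /sep !(discriminator_eq tA) (discriminator_neq tA).
have sep_agree : agree 0 (sep x x) (sep x y).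
  rewrite /sep; apply: agree_eval => -[[|[|[|//]]] ?]; rewrite /rho3 /=;
    last exact: agree_refl;
  apply: agree_eval => -[[|[|[|//]]] ?]; rewrite /rho3 /=; try exact: agree_refl;
  by rewrite add0n addnn -mul2n.
apply: contrapT => neq_xy.
have sep_xy : sep x y = top A.
  by rewrite /sep !(discriminator_neq tA _ neq_xy) (discriminator_eq tA).
by move: (sep_agree [::] isT); rewrite /= sep_xy sep_xx h_bot h_top.
Qed.

End Signatures.

Lemma signature_embedding (F : finType) (pos : pred F) (A : CornishAlg pos) t :
  induces_discriminator A t -> bot A <> top A ->
  exists iota : A -> signatures F (2 * depth t), injective iota.
Proof.
move=> tA bot_neq_top; have [h [hJ hM h0 h1]] := prime_filter_hom bot_neq_top.
by exists (signature h (2 * depth t)); apply: signature_inj.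
Qed.

Lemma In_pmap (aT : eqType) (rT : Type) (f : aT -> option rT) s y :
  List.In y (pmap f s) <-> exists2 x, x \in s & f x = Some y.
Proof.
elim: s => [|x s IH]; first by split=> // -[].
have In_cons : List.In y (pmap f (x :: s)) <-> f x = Some y \/ List.In y (pmap f s).
  rewrite /=; case: (f x) => [z|] /=; last by split=> [|[//|]]; auto.
  by split=> [[->|]|[[->]|]]; auto.
rewrite In_cons IH; split=> [[fx|[x' sx' fx']]|[x' /predU1P [-> fx|sx' fx']]].
- by exists x; rewrite ?mem_head.
- by exists x'; rewrite // inE sx' orbT.
- by left.
- by right; exists x'.
Qed.

Definition opt_inv (T : Type) (U : Type) (f : T -> U) (z : U) : option T :=
  if pselect (exists x, f x = z) is left ex then Some (sval (cid ex)) else None.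

Lemma opt_invK (T U : Type) (f : T -> U) : injective f -> forall x, opt_inv f (f x) = Some x.
Proof.
move=> f_inj x; rewrite /opt_inv; case: pselect => [ex|[]]; last by exists x.
by case: cid => y /= /f_inj ->.
Qed.

Lemma finite_alg_inj (F : finType) (pos : pred F) (A : CornishAlg pos) (D : finType)
    (iota : A -> D) : injective iota -> finite_alg A.
Proof.
move=> iota_inj; exists (pmap (opt_inv iota) (enum D)) => x.
by apply/In_pmap; exists (iota x); rewrite ?mem_enum ?opt_invK.
Qed.

(* A code over D: a subset of D together with tables for the Cornish operations
   on it; codes over a finite D form a finite type. *)
Notation code F D :=
  ({set D} * {ffun D * D -> D} * {ffun D * D -> D} * {ffun F * D -> D} * D * D)%type.

Section Realizations.
Variables (F : finType) (pos : pred F) (D : finType).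
Implicit Types (c : code F D) (A B : CornishAlg pos).

Definition code_dom c : {set D} := c.1.1.1.1.1.
Definition code_join c x y := c.1.1.1.1.2 (x, y).
Definition code_meet c x y := c.1.1.1.2 (x, y).
Definition code_op c f x := c.1.1.2 (f, x).
Definition code_bot c := c.1.2.
Definition code_top c := c.2.

Fixpoint code_eval c (X : Type) (rho : X -> D) (s : term F X) : D :=
  match s with
  | tVar x => rho x
  | tJoin s1 s2 => code_join c (code_eval c rho s1) (code_eval c rho s2)
  | tMeet s1 s2 => code_meet c (code_eval c rho s1) (code_eval c rho s2)
  | tOp f s1 => code_op c f (code_eval c rho s1)
  | tBot => code_bot c
  | tTop => code_top c
  end.

Record realizes A c (iota : A -> D) : Prop := Realizes {
  realizes_inj : injective iota;
  realizes_dom z : z \in code_dom c <-> exists x, iota x = z;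
  realizes_join x y : iota (join x y) = code_join c (iota x) (iota y);
  realizes_meet x y : iota (meet x y) = code_meet c (iota x) (iota y);
  realizes_op f x : iota (op f x) = code_op c f (iota x);
  realizes_bot : iota (bot A) = code_bot c;
  realizes_top : iota (top A) = code_top c }.

Lemma realizes_eval A c (iota : A -> D) (X : Type) (rho : X -> A) s :
  realizes c iota -> iota (eval rho s) = code_eval c (iota \o rho) s.
Proof.
case=> _ _ iJ iM iO i0 i1.
by elim: s => //= [s1 IH1 s2 IH2|s1 IH1 s2 IH2|f s IH]; rewrite ?iJ ?iM ?iO ?IH1 ?IH2 ?IH.
Qed.

Lemma realizes_satisfies A B c (iA : A -> D) (iB : B -> D) e :
  realizes c iA -> realizes c iB -> satisfies B e -> satisfies A e.
Proof.
move=> AiA BiB Be rho.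
have [rho' iBrho'] : exists rho' : nat -> B, iB \o rho' = iA \o rho.
  have iAB n : exists y, iB y = iA (rho n).
    by apply/(realizes_dom BiB)/(realizes_dom AiA); exists (rho n).
  by exists (fun n => sval (cid (iAB n))); apply: funext => n /=; case: cid.
apply: (realizes_inj AiA).
by rewrite !(realizes_eval _ _ AiA) -iBrho' -!(realizes_eval _ _ BiB) Be.
Qed.

Section CodeOf.
Variables (A : CornishAlg pos) (iota : A -> D).
Hypothesis iota_inj : injective iota.

Let inv z := odflt (bot A) (opt_inv iota z).

Let invK x : inv (iota x) = x.
Proof. by rewrite /inv opt_invK. Qed.

Definition code_of : code F D :=
  ([set z | `[< exists x, iota x = z >]],
   [ffun zz => iota (join (inv zz.1) (inv zz.2))],
   [ffun zz => iota (meet (inv zz.1) (inv zz.2))],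
   [ffun fz => iota (op fz.1 (inv fz.2))],
   iota (bot A), iota (top A)).

Lemma code_ofP : realizes code_of iota.
Proof.
split=> // [z|x y|x y|f x]; last 3 first.
- by rewrite /code_join /= ffunE /= !invK.
- by rewrite /code_meet /= ffunE /= !invK.
- by rewrite /code_op /= ffunE /= !invK.
by rewrite /code_dom inE; split=> /asboolP.
Qed.

End CodeOf.
End Realizations.

Lemma si_nontrivial (F : finType) (pos : pred F) (A : CornishAlg pos) :
  subdirectly_irreducible A -> bot A <> top A.
Proof. by case=> a [b [neq_ab _]] /bot_top_trivial /(_ a b). Qed.

Section Classification.
Variables (F : finType) (pos : pred F) (V : CornishAlg pos -> Prop) (t : term F 'I_3).

Local Notation D := (signatures F (2 * depth t)).

Definition is_coded_model (c : code F D) (B : CornishAlg pos) :=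
  [/\ exists iota : B -> D, realizes c iota, V B & induces_discriminator B t].

Definition coded_model (c : code F D) : option (CornishAlg pos) :=
  if pselect (exists B, is_coded_model c B) is left ex then Some (sval (cid ex)) else None.

Definition coded_models : list (CornishAlg pos) := pmap coded_model (enum {: code F D}).

Lemma coded_modelsP B : List.In B coded_models ->
  [/\ exists c (iota : B -> D), realizes c iota, V B & induces_discriminator B t].
Proof.
case/In_pmap=> c _; rewrite /coded_model; case: pselect => // ex [<-].
by case: cid => /= B' [[iota Biota] VB tB]; split=> //; exists c, iota.
Qed.

Lemma coded_models_complete (A : CornishAlg pos) (c : code F D) (iota : A -> D) :
  realizes c iota -> V A -> induces_discriminator A t ->
  exists2 B, List.In B coded_models & exists iB : B -> D, realizes c iB.
Proof.
move=> Aiota VA tA; rewrite /coded_models.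
have ex : exists B, is_coded_model c B by exists A; split=> //; exists iota.
exists (sval (cid ex)); last by case: cid => /= B [].
apply/In_pmap; exists c; rewrite ?mem_enum // /coded_model.
by case: pselect => // ex'; rewrite (Prop_irrelevance ex' ex).
Qed.

End Classification.

Theorem theorem5p6 (F : finType) (pos : pred F) (V : CornishAlg pos -> Prop) :
  discriminator_variety V ->
  exists (K : list (CornishAlg pos)) (t : term F 'I_3),
    (forall A, List.In A K -> quasi_primal A /\ induces_discriminator A t) /\
    (forall A, V A <-> generated_variety (fun B => List.In B K) A).
Proof.
case=> -[Sigma VE] [t tV]; exists (coded_models V t), t; split.
  move=> B /coded_modelsP [[c [iota /realizes_inj iota_inj]] _ tB].
  by split=> //; split; [apply: finite_alg_inj iota_inj|exists t].
move=> A; split=> [VA e Ke|KA]; last first.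
  by apply/VE => e Se; apply: KA => B /coded_modelsP [_ /VE VB _]; apply: VB.
apply: satisfies_of_si_quotients => th th_cong si_Q.
have VQ : V (quotient th_cong).
  apply/VE => e' Se'; move/VE/(_ e' Se'): VA.
  exact: hom_surj_satisfies (qpi_hom th_cong) (@qpi_surj _ _ _ _ th_cong).
have tQ := tV _ VQ si_Q.
have [iota iota_inj] := signature_embedding tQ (si_nontrivial si_Q).
have [B KB [iB BiB]] := coded_models_complete (code_ofP iota_inj) VQ tQ.
exact: realizes_satisfies (code_ofP iota_inj) BiB (Ke B KB).
Qed.
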